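(* Fix a static program and its associated dimension function $\#$. For any expression context $C[\cdot]$ and expressions $e,e'$, if $\#(e)\sqsubseteq\#(e')$ then $\#(C[e])\sqsubseteq\#(C[e'])$.
   Context: Expressions: fix countable sets of variables $\mathbb{X}$, procedure names $\mathbb{F}$, primitive names $\Pi$, handles $\mathbb{H}$, and a set of values $\mathbb{C}$. Expressions are $e ::= x_h \mid c_h \mid [\mathrm{let}_h\,x_1\dots x_n \text{ be } e \text{ in } e] \mid [\mathrm{call}_h\,f\ e_1\dots e_n] \mid [\mathrm{primitive}_h\,\pi\ e_1\dots e_n] \mid [\mathrm{if}_h\,e\in\{c_1,\dots,c_n\}\text{ then } e \text{ else } e] \mid [\mathrm{fork}_h\,f\ e_1\dots e_n] \mid [\mathrm{join}_h\,e] \mid [\mathrm{bundle}_h\,e_1\dots e_n]$ ($n\ge0$), with handles pairwise distinct. An expression context $C[\cdot]$ is an expression with a single hole occurring in a subexpression position (possibly the whole expression). A program consists of a procedure environment (a finite map from procedure names $f$ to formals $x_1\dots x_n$ and a body expression), a primitive environment in which each primitive $\pi$ has an in-dimension $n$ and out-dimension $m$ (written $\pi:_\# n\to m$), and a main expression. Dimension lattice: $\mathbb{N}_\bot^\top=\{\bot,\top\}\cup\{\uparrow n: n\in\mathbb{N}\}$ with the flat order $\bot\sqsubset\uparrow n\sqsubset\top$ (distinct $\uparrow n$ incomparable), join $\sqcup$; $\mathbb{N}_\bot=\mathbb{N}_\bot^\top\setminus\{\top\}$. The relation $e:_\# d$ ($d\in\mathbb{N}_\bot$) and procedure dimensions $f:_\#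 n\to d$ are defined mutually recursively: $x_h:_\#\uparrow1$; $c_h:_\#\uparrow1$; $[\mathrm{bundle}_{h_0}e_1..e_n]:_\#\uparrow n$ if $e_i:_\# d_i$ with $d_i\sqsubseteq\uparrow1$ for all $i$; $[\mathrm{let}_{h_0}x_1..x_n\text{ be }e_1\text{ in }e_2]:_\# d_2$ if $e_1:_\# d_1$, $e_2:_\# d_2$, $d_1\sqsubseteq\uparrow m$ for some $m\ge n$ and $d_2\sqsubset\top$; $[\mathrm{primitive}_{h_0}\pi\,e_1..e_n]:_\#\uparrow m$ if $\pi:_\# n\to m$ and $e_i:_\# d_i\sqsubseteq\uparrow1$ for all $i$; $[\mathrm{call}_{h_0}f\,e_1..e_n]:_\# d$ if $f:_\# n\to d$, $e_i:_\# d_i\sqsubseteq\uparrow1$ for all $i$, and $d\sqsubset\top$; $[\mathrm{if}_{h_0}e_1\in\{c_1..c_n\}\text{ then }e_2\text{ else }e_3]:_\# d$ if $e_j:_\# d_j$ ($j=1,2,3$), $d_1\sqsubseteq\uparrow1$, $d=d_2\sqcup d_3$ and $d\sqsubset\top$; $[\mathrm{fork}_{h_0}f\,e_1..e_n]:_\#\uparrow1$ if $f:_\# n\to d$ with $d\sqsubseteq\uparrow1$ and $e_i:_\# d_i\sqsubseteq\uparrow1$ for all $i$; $[\mathrm{join}_{h_0}e_1]:_\#\uparrow1$ if $e_1:_\# d_1\sqsubseteq\uparrow1$. For each procedure $f$ of the program with formals $x_1..x_n$ and body $b$, $f:_\# n\to d$ where $d$ is the least fixpoint such that $\#(b)=d$.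 Finally $\#:\text{Expressions}\to\mathbb{N}_\bot^\top$ is the total extension of $:_\#$, returning $\top$ where $:_\#$ is undefined. *)

From mathcomp Require Import all_boot.
Set Implicit Arguments. Unset Strict Implicit. Unset Printing Implicit Defensive.

Inductive dim : Type := DBot | DUp of nat | DTop.

Definition dle (d d' : dim) : bool :=
  match d, d' with
  | DBot, _ => true
  | _, DTop => true
  | DUp n, DUp m => n == m
  | _, _ => false
  end.

Definition dnotTop (d : dim) : bool := if d is DTop then false else true.

Definition dltTop (d : dim) : bool := dnotTop d.

Definition djoin (d d' : dim) : dim :=
  match d, d' with
  | DBot, x => x
  | x, DBot => x
  | DUp n, DUp m => if n == m then DUp n else DTop
  | _, _ => DTop
  end.

Definition dle_up_ge (d : dim) (n : nat) : bool :=
  match d with DBot => true | DUp m => n <= m | DTop => false end.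

Section Lang.
Variables (X F Pi H V : countType).

Inductive expr : Type :=
| EVar    of H & X
| EConst  of H & V
| ELet    of H & seq X & expr & expr
| ECall   of H & F & seq expr
| EPrim   of H & Pi & seq expr
| EIf     of H & expr & seq V & expr & expr
| EFork   of H & F & seq expr
| EJoin   of H & expr
| EBundle of H & seq expr.

Fixpoint handles (e : expr) : seq H :=
  match e with
  | EVar h _ | EConst h _ => [:: h]
  | ELet h _ e1 e2 => h :: handles e1 ++ handles e2
  | ECall h _ es | EPrim h _ es | EFork h _ es | EBundle h es =>
      h :: flatten (map handles es)
  | EIf h e1 _ e2 e3 => h :: handles e1 ++ handles e2 ++ handles e3
  | EJoin h e1 => h :: handles e1
  end.

Definition wf_expr (e : expr) : bool := uniq (handles e).

Inductive ctx : Type :=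
| CHole
| CLet1    of H & seq X & ctx & expr
| CLet2    of H & seq X & expr & ctx
| CCall    of H & F & seq expr & ctx & seq expr
| CPrim    of H & Pi & seq expr & ctx & seq expr
| CIf1     of H & ctx & seq V & expr & expr
| CIf2     of H & expr & seq V & ctx & expr
| CIf3     of H & expr & seq V & expr & ctx
| CFork    of H & F & seq expr & ctx & seq expr
| CJoin    of H & ctx
| CBundle  of H & seq expr & ctx & seq expr.

Fixpoint plug (C : ctx) (e : expr) : expr :=
  match C with
  | CHole => e
  | CLet1 h xs C1 e2 => ELet h xs (plug C1 e) e2
  | CLet2 h xs e1 C2 => ELet h xs e1 (plug C2 e)
  | CCall h f es1 C1 es2 => ECall h f (es1 ++ plug C1 e :: es2)
  | CPrim h p es1 C1 es2 => EPrim h p (es1 ++ plug C1 e :: es2)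
  | CIf1 h C1 cs e2 e3 => EIf h (plug C1 e) cs e2 e3
  | CIf2 h e1 cs C2 e3 => EIf h e1 cs (plug C2 e) e3
  | CIf3 h e1 cs e2 C3 => EIf h e1 cs e2 (plug C3 e)
  | CFork h f es1 C1 es2 => EFork h f (es1 ++ plug C1 e :: es2)
  | CJoin h C1 => EJoin h (plug C1 e)
  | CBundle h es1 C1 es2 => EBundle h (es1 ++ plug C1 e :: es2)
  end.

(* procs f = Some (formals, body) if f is defined; prim p = (in-dim, out-dim) *)
Record program : Type := Program {
  procs : F -> option (seq X * expr);
  prim  : Pi -> nat * nat;
  main  : expr
}.

Definition program_ok (P : program) : Prop :=
  (exists s : seq F, forall f, procs P f <> None -> f \in s) /\
  (forall f xs b, procs P f = Some (xs, b) -> wf_expr b) /\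
  wf_expr (main P).

(* pd f is the d in  f :# n -> d  (n = number of formals of f).
   dimE P pd e is the total extension # (value DTop where :# is undefined). *)
Definition le1 (d : dim) : bool := dle d (DUp 1).

Fixpoint dimE (P : program) (pd : F -> dim) (e : expr) : dim :=
  match e with
  | EVar _ _ => DUp 1
  | EConst _ _ => DUp 1
  | EBundle _ es =>
      if all le1 (map (dimE P pd) es) then DUp (size es) else DTop
  | ELet _ xs e1 e2 =>
      let d1 := dimE P pd e1 in let d2 := dimE P pd e2 in
      if dle_up_ge d1 (size xs) && dltTop d2 then d2 else DTop
  | EPrim _ p es =>
      if (size es == (prim P p).1) && all le1 (map (dimE P pd) es)
      then DUp (prim P p).2 else DTop
  | ECall _ f es =>
      match procs P f with
      | Some (xs, _) =>
          if (size es == size xs) && all le1 (map (dimE P pd) es)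
             && dltTop (pd f)
          then pd f else DTop
      | None => DTop
      end
  | EIf _ e1 _ e2 e3 =>
      let d := djoin (dimE P pd e2) (dimE P pd e3) in
      if le1 (dimE P pd e1) && dltTop d then d else DTop
  | EFork _ f es =>
      match procs P f with
      | Some (xs, _) =>
          if (size es == size xs) && le1 (pd f) && all le1 (map (dimE P pd) es)
          then DUp 1 else DTop
      | None => DTop
      end
  | EJoin _ e1 => if le1 (dimE P pd e1) then DUp 1 else DTop
  end.

(* the operator whose least fixpoint gives the procedure dimensions *)
Definition procOp (P : program) (pd : F -> dim) (f : F) : dim :=
  match procs P f with
  | Some (_, b) => dimE P pd b
  | None => DBot
  end.

Definition pd_le (pd pd' : F -> dim) : Prop := forall f, dle (pd f) (pd' f).

Definition is_proc_dims (P : program) (pd : F -> dim) : Prop :=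
  (forall f, procOp P pd f = pd f) /\
  (forall pd', (forall f, procOp P pd' f = pd' f) -> pd_le pd pd').

End Lang.

(* Every clause of # has the shape "if guard then value else ⊤", where the
   guards only ask subexpression dimensions to lie below ↑1, ↑m or ⊤ (downward
   closed conditions) and the values are monotone in those dimensions.  Hence
   each expression former is monotone, and induction on the context concludes.
   The argument works for any assignment of procedure dimensions. *)

From mathcomp Require Import all_boot.

Set Implicit Arguments.
Unset Strict Implicit.

Lemma dle_refl d : dle d d.
Proof. by case: d => //= n; rewrite eqxx. Qed.

Lemma dle_top d : dle d DTop.
Proof. by case: d. Qed.

Lemma dle_trans a b c : dle a b -> dle b c -> dle a c.
Proof. by case: a => [|n|]; case: b => [|m|]; case: c => [|k|] //= /eqP->. Qed.

Lemma dle_guard (c c' : bool) d d' : (c' -> c) -> dle d d' ->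
  dle (if c then d else DTop) (if c' then d' else DTop).
Proof. by case: c' => [/(_ isT)-> //|_ _]; rewrite dle_top. Qed.

Lemma dle_guard_const (c c' : bool) d : (c' -> c) ->
  dle (if c then d else DTop) (if c' then d else DTop).
Proof. by move=> cc'; apply: dle_guard cc' (dle_refl d). Qed.

Lemma le1_dle d d' : dle d d' -> le1 d' -> le1 d.
Proof. exact: dle_trans. Qed.

Lemma dltTop_dle d d' : dle d d' -> dltTop d' -> dltTop d.
Proof. by case: d; case: d'. Qed.

Lemma dle_up_ge_dle d d' n : dle d d' -> dle_up_ge d' n -> dle_up_ge d n.
Proof. by case: d => [|k|]; case: d' => [|m|] //= /eqP->. Qed.

Lemma djoin_dle a a' b b' : dle a a' -> dle b b' -> dle (djoin a b) (djoin a' b').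
Proof.
case: a => [|n|]; case: a' => [|n'|]; case: b => [|m|]; case: b' => [|m'|] //=;
  repeat (move/eqP=> ?; subst); rewrite ?dle_refl ?dle_top //;
  repeat (case: eqP => ? //=; subst); rewrite ?eqxx.
Qed.

Lemma all_le1_map_mid (T : Type) (f : T -> dim) (s1 s2 : seq T) a a' :
  dle (f a) (f a') ->
  all le1 (map f (s1 ++ a' :: s2)) -> all le1 (map f (s1 ++ a :: s2)).
Proof.
by move=> aa'; rewrite !map_cat !all_cat /= => /and3P[-> /(le1_dle aa') ->].
Qed.

Section Monotonicity.
Variables (X F Pi H V : countType) (P : program X F Pi H V) (pd : F -> dim).

Local Notation dim_of := (dimE P pd).

Lemma dimE_plug_dle (C : ctx X F Pi H V) (e e' : expr X F Pi H V) :
  dle (dim_of e) (dim_of e') -> dle (dim_of (plug C e)) (dim_of (plug C e')).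
Proof.
move=> ee'; elim: C => [|h xs C IH e2|h xs e1 C IH|h f s1 C IH s2|h p s1 C IH s2
  |h C IH cs e2 e3|h e1 cs C IH e3|h e1 cs e2 C IH|h f s1 C IH s2
  |h C IH|h s1 C IH s2] //=; rewrite ?size_cat /=.
- by apply: dle_guard_const => /andP[/(dle_up_ge_dle IH) -> ->].
- by apply: dle_guard => // /andP[-> /(dltTop_dle IH)].
- case: (procs P f) => [[xs b]|]; last exact: dle_refl.
  by apply: dle_guard_const => /andP[/andP[-> /(all_le1_map_mid IH) ->] ->].
- by apply: dle_guard_const => /andP[-> /(all_le1_map_mid IH) ->].
- by apply: dle_guard_const => /andP[/(le1_dle IH) -> ->].
- have J := djoin_dle IH (dle_refl (dim_of e3)).
  by apply: dle_guard => // /andP[-> /(dltTop_dle J)].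
- have J := djoin_dle (dle_refl (dim_of e2)) IH.
  by apply: dle_guard => // /andP[-> /(dltTop_dle J)].
- case: (procs P f) => [[xs b]|]; last exact: dle_refl.
  by apply: dle_guard_const => /andP[/andP[-> ->] /(all_le1_map_mid IH) ->].
- exact/dle_guard_const/le1_dle.
- exact/dle_guard_const/all_le1_map_mid.
Qed.

End Monotonicity.

Theorem mainTheorem3 (X F Pi H V : countType) (P : program X F Pi H V)
  (pd : F -> dim) :
  program_ok P -> is_proc_dims P pd ->
  forall (C : ctx X F Pi H V) (e e' : expr X F Pi H V),
    wf_expr (plug C e) -> wf_expr (plug C e') ->
    dle (dimE P pd e) (dimE P pd e') ->
    dle (dimE P pd (plug C e)) (dimE P pd (plug C e')).
Proof. by move=> _ _ C e e' _ _; apply: dimE_plug_dle. Qed.
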